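(* Let $m\ge1$ be an integer and let $\delta>1$ be the positive root of $x^2-(m+1)x-1$. Let $r\in(0,1)$ be rational and suppose its Rényi $\delta$-expansion is purely periodic, $d_\delta(r)=(d_1d_2\cdots d_n)^\omega$ for some $n\ge1$. Then $d_n=0$.
   Context: The Rényi $\delta$-expansion of $x\in[0,1)$ is the greedy expansion $d_\delta(x)=d_1d_2\cdots$ defined by $r_0=x$, $d_{k+1}=\lfloor\delta r_k\rfloor$, $r_{k+1}=\delta r_k-d_{k+1}$, so that $x=\sum_{k\ge1}d_k\delta^{-k}$. For this $\delta$, the digits lie in $\{0,1,\dots,m+1\}$ and the sequences $d_{i+1}d_{i+2}\cdots$ are lexicographically smaller than $((m+1)0)^\omega$ for every $i\ge0$. *)

From Stdlib Require Import Reals ZArith.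
Open Scope R_scope.

Definition Rfloor (x : R) : Z := (up x - 1)%Z.

Fixpoint renyi_rem (delta x : R) (k : nat) : R :=
  match k with
  | O => x
  | S k' => delta * renyi_rem delta x k' - IZR (Rfloor (delta * renyi_rem delta x k'))
  end.

(* Renyi digits: d_{k+1} = floor(delta r_k); renyi_digit delta x k = d_k for k >= 1
   (the value at k = 0 is irrelevant and set to 0). *)
Definition renyi_digit (delta x : R) (k : nat) : Z :=
  match k with
  | O => 0%Z
  | S k' => Rfloor (delta * renyi_rem delta x k')
  end.

Definition is_rational (x : R) : Prop :=
  exists (p : Z) (q : Z), q <> 0%Z /\ x = IZR p / IZR q.

(** Let [δ' = m + 1 - δ = -1/δ] be the Galois conjugate of [δ].  Since the
    digits are periodic, [r_(k+n) - r_k = δ^k (r_n - r)] stays in [(-1, 1)], so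
    [r_n = r].  Applying the conjugation [δ ↦ δ'] to the recursion
    [r_(k+1) = δ r_k - d_(k+1)] gives conjugate remainders
    [r'_(k+1) = δ' r'_k - d_(k+1)] starting at [r'_0 = r]; an induction shows
    [-δ <= r'_k <= 1].  As [r_n = r] is rational and [δ] is irrational, the
    conjugate of [r_n] is [r_n] itself, i.e. [r = r'_n = -r'_(n-1)/δ - d_n
    <= 1 - d_n], which forces [d_n = 0]. *)

From Stdlib Require Import Reals ZArith Zwf Lra Lia Psatz.
Open Scope R_scope.

Lemma Rfloor_spec (x : R) : IZR (Rfloor x) <= x < IZR (Rfloor x) + 1.
Proof.
  unfold Rfloor; destruct (archimed x) as [Hup1 Hup2].
  rewrite minus_IZR; simpl; lra.
Qed.

Lemma renyi_rem_bounds (delta x : R) (k : nat) :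
  0 <= x < 1 -> 0 <= renyi_rem delta x k < 1.
Proof.
  intros Hx; destruct k as [|k]; simpl; [lra|].
  pose proof (Rfloor_spec (delta * renyi_rem delta x k)); lra.
Qed.

Lemma renyi_digit_bounds (delta x : R) (k : nat) :
  0 < delta -> 0 <= x < 1 ->
  (0 <= renyi_digit delta x (S k))%Z /\ IZR (renyi_digit delta x (S k)) < delta.
Proof.
  intros Hd Hx; simpl.
  pose proof (renyi_rem_bounds delta x k Hx).
  pose proof (Rfloor_spec (delta * renyi_rem delta x k)).
  split; [|nra].
  apply Z.lt_succ_r, lt_IZR; rewrite succ_IZR; nra.
Qed.

Lemma renyi_rem_shift_diff (delta x : R) (n : nat) :
  (forall k : nat, (1 <= k)%nat -> renyi_digit delta x (k + n) = renyi_digit delta x k) ->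
  forall k : nat,
    renyi_rem delta x (k + n) - renyi_rem delta x k = delta ^ k * (renyi_rem delta x n - x).
Proof.
  intros Hper k; induction k as [|k IH]; [simpl; ring|].
  pose proof (Hper (S k) ltac:(lia)) as Hdig; simpl in Hdig |- *.
  rewrite Hdig, Rmult_assoc, <- IH; ring.
Qed.

(* The differences [r_(k+n) - r_k] lie in (-1, 1) but grow like [δ^k]. *)
Lemma renyi_rem_periodic (delta x : R) (n : nat) :
  1 < delta -> 0 <= x < 1 ->
  (forall k : nat, (1 <= k)%nat -> renyi_digit delta x (k + n) = renyi_digit delta x k) ->
  renyi_rem delta x n = x.
Proof.
  intros Hd Hx Hper.
  destruct (Req_dec (renyi_rem delta x n - x) 0) as [He|He]; [lra|exfalso].
  pose proof (Rabs_pos_lt _ He) as Hepos.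
  destruct (Pow_x_infinity delta ltac:(rewrite Rabs_pos_eq; lra) (/ Rabs (renyi_rem delta x n - x)))
    as [N HN].
  specialize (HN N (le_n N)).
  pose proof (renyi_rem_shift_diff delta x n Hper N) as Hdiff.
  pose proof (renyi_rem_bounds delta x (N + n) Hx).
  pose proof (renyi_rem_bounds delta x N Hx).
  assert (Hsmall : Rabs (delta ^ N * (renyi_rem delta x n - x)) < 1)
    by (rewrite <- Hdiff; apply Rabs_def1; lra).
  rewrite Rabs_mult in Hsmall.
  apply Rge_le, (Rmult_le_compat_r (Rabs (renyi_rem delta x n - x))) in HN; [|lra].
  rewrite Rinv_l in HN; lra.
Qed.

Section QuadraticUnit.

Variables (m : nat) (delta : R).
Hypothesis delta_gt1 : 1 < delta.
Hypothesis delta_root : delta ^ 2 - (INR m + 1) * delta - 1 = 0.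

Lemma conjugate_root_eq : INR m + 1 - delta = - / delta.
Proof.
  apply (Rmult_eq_reg_l delta); [|lra].
  rewrite Ropp_mult_distr_r_reverse, Rinv_r by lra; nra.
Qed.

Lemma delta_lt_succ : delta < INR m + 2.
Proof.
  pose proof conjugate_root_eq.
  assert (/ delta < 1) by (rewrite <- Rinv_1; apply Rinv_lt_contravar; lra).
  lra.
Qed.

Lemma root_mul_linear (y : R) (a b c : Z) :
  y ^ 2 - (INR m + 1) * y - 1 = 0 ->
  y * (IZR a + IZR b * y) - IZR c = IZR (b - c) + IZR (a + (Z.of_nat m + 1) * b) * y.
Proof.
  intros Hy.
  rewrite minus_IZR, plus_IZR, mult_IZR, plus_IZR, <- INR_IZR_INZ.
  apply Rminus_diag_uniq; rewrite <- (Rmult_0_r (IZR b)), <- Hy; simpl; ring.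
Qed.

(* Descent: from [δ b = a] with [b > 0], the integer [a - (m+1) b = b / δ] is
   a smaller positive solution. *)
Lemma delta_not_rational_pos (b : Z) : (0 < b)%Z -> forall a : Z, delta * IZR b <> IZR a.
Proof.
  induction b as [b IH] using (well_founded_induction (Zwf_well_founded 0)).
  intros Hb a Hab.
  pose proof conjugate_root_eq as Hconj.
  assert (Hb' : IZR (a - (Z.of_nat m + 1) * b) = IZR b * / delta).
  { rewrite minus_IZR, mult_IZR, plus_IZR, <- INR_IZR_INZ, <- Hab.
    replace (/ delta) with (delta - (INR m + 1)) by lra; simpl; ring. }
  assert (Hbpos : 0 < IZR b) by (apply IZR_lt; lia).
  assert (Hinv : 0 < / delta < 1).
  { split; [apply Rinv_0_lt_compat; lra|].
    rewrite <- Rinv_1; apply Rinv_lt_contravar; lra. }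
  assert (Hlo : (0 < a - (Z.of_nat m + 1) * b)%Z) by (apply lt_IZR; rewrite Hb'; nra).
  assert (Hhi : (a - (Z.of_nat m + 1) * b < b)%Z) by (apply lt_IZR; rewrite Hb'; nra).
  apply (IH (a - (Z.of_nat m + 1) * b)%Z ltac:(unfold Zwf; lia) Hlo b).
  rewrite Hb'; field; lra.
Qed.

Lemma delta_irrational (a b : Z) : IZR a + IZR b * delta = 0 -> b = 0%Z.
Proof.
  intros Hab; destruct (Z.lt_trichotomy b 0) as [Hneg|[Hz|Hpos]]; auto; exfalso.
  - apply (delta_not_rational_pos (- b) ltac:(lia) a); rewrite opp_IZR; lra.
  - apply (delta_not_rational_pos b Hpos (- a)); rewrite opp_IZR; lra.
Qed.

Fixpoint renyi_conj (x : R) (k : nat) : R :=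
  match k with
  | O => x
  | S k' => (INR m + 1 - delta) * renyi_conj x k' - IZR (renyi_digit delta x (S k'))
  end.

Lemma renyi_conj_bounds (x : R) (k : nat) :
  0 <= x < 1 -> - delta <= renyi_conj x k <= 1.
Proof.
  intros Hx; induction k as [|k IH]; cbn [renyi_conj]; [lra|].
  destruct (renyi_digit_bounds delta x k ltac:(lra) Hx) as [Hlo Hhi].
  apply IZR_le in Hlo.
  rewrite conjugate_root_eq.
  pose proof conjugate_root_eq; pose proof delta_lt_succ.
  assert (Hdig : IZR (renyi_digit delta x (S k)) <= INR m + 1).
  { rewrite INR_IZR_INZ, <- succ_IZR; apply IZR_le, Z.lt_succ_r, lt_IZR.
    rewrite succ_IZR, succ_IZR, <- INR_IZR_INZ; lra. }
  assert (Hdinv : 0 < / delta) by (apply Rinv_0_lt_compat; lra).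
  assert (/ delta * delta = 1) by (field; lra).
  split; nra.
Qed.

(* [r_k] and [r'_k] are images of one element of [(1/q) Z[δ]] under the two
   embeddings [δ ↦ δ] and [δ ↦ m + 1 - δ]. *)
Lemma renyi_rem_conj_coords (x : R) (p q : Z) (k : nat) :
  IZR q * x = IZR p ->
  exists a b : Z,
    IZR q * renyi_rem delta x k = IZR a + IZR b * delta /\
    IZR q * renyi_conj x k = IZR a + IZR b * (INR m + 1 - delta).
Proof.
  intros Hqx; induction k as [|k [a [b [Hrem Hconj]]]].
  - exists p, 0%Z; simpl; split; lra.
  - set (c := renyi_digit delta x (S k)).
    assert (Hroot' : (INR m + 1 - delta) ^ 2 - (INR m + 1) * (INR m + 1 - delta) - 1 = 0)
      by nra.
    exists (b - q * c)%Z, (a + (Z.of_nat m + 1) * b)%Z.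
    rewrite <- (root_mul_linear delta), <- (root_mul_linear (INR m + 1 - delta)),
      mult_IZR, <- Hrem, <- Hconj by assumption.
    unfold c; simpl; split; ring.
Qed.

Lemma renyi_conj_rational_fixed (x : R) (n : nat) :
  is_rational x -> renyi_rem delta x n = x -> renyi_conj x n = x.
Proof.
  intros [p [q [Hq Hpq]]] Hfix.
  assert (Hqx : IZR q * x = IZR p) by (rewrite Hpq; field; apply not_0_IZR; auto).
  destruct (renyi_rem_conj_coords x p q n Hqx) as [a [b [Hrem Hconj]]].
  rewrite Hfix, Hqx in Hrem.
  assert (b = 0%Z) by (apply (delta_irrational (a - p) b); rewrite minus_IZR; lra).
  subst b.
  apply (Rmult_eq_reg_l (IZR q)); [|apply not_0_IZR; auto]; lra.
Qed.

End QuadraticUnit.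

Theorem mainTheorem11 (m : nat) (delta r : R) (n : nat) :
  (1 <= m)%nat ->
  1 < delta ->
  delta ^ 2 - (INR m + 1) * delta - 1 = 0 ->
  0 < r < 1 ->
  is_rational r ->
  (1 <= n)%nat ->
  (forall k : nat, (1 <= k)%nat -> renyi_digit delta r (k + n) = renyi_digit delta r k) ->
  renyi_digit delta r n = 0%Z.
Proof.
  intros _ Hd Hroot Hr Hrat Hn Hper.
  assert (Hr' : 0 <= r < 1) by lra.
  pose proof (renyi_conj_rational_fixed m delta Hd Hroot r n Hrat
                (renyi_rem_periodic delta r n Hd Hr' Hper)) as Hfix.
  destruct n as [|n]; [lia|].
  destruct (renyi_digit_bounds delta r n ltac:(lra) Hr') as [Hlo _].
  pose proof (renyi_conj_bounds m delta Hd Hroot r n Hr') as Hprev.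
  cbn [renyi_conj] in Hfix; rewrite (conjugate_root_eq m delta Hd Hroot) in Hfix.
  assert (Hstep : - / delta * renyi_conj m delta r n <= 1).
  { assert (/ delta * delta = 1) by (field; lra).
    assert (0 < / delta) by (apply Rinv_0_lt_compat; lra). nra. }
  assert (Hlt : (renyi_digit delta r (S n) < 1)%Z) by (apply lt_IZR; lra).
  lia.
Qed.
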